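(* For $\mathbf{u}\in\mathbb{R}^6$ define $\mathbf{w}^{\pm}(\mathbf{u})=\frac12\left(\mathbf{u}\pm\frac{\mathbf{f}(\mathbf{u})}{\alpha(\mathbf{u})}\right)$ with $\alpha(\mathbf{u})=|v_1|+\sqrt{3p_{11}/\rho}$. If $\mathbf{u}\in\mathbb{U}_{\mathrm{ad}}$, then $\mathbf{w}^+(\mathbf{u})\in\mathbb{U}_{\mathrm{ad}}$ and $\mathbf{w}^-(\mathbf{u})\in\mathbb{U}_{\mathrm{ad}}$.
   Context: Ten-Moment equations: conservative variable $\mathbf{u}=(\rho,\rho v_1,\rho v_2,E_{11},E_{12},E_{22})^\top$; pressure tensor components $p_{11}=2E_{11}-\rho v_1^2$, $p_{12}=2E_{12}-\rho v_1v_2$, $p_{22}=2E_{22}-\rho v_2^2$. $\mathbb{U}_{\mathrm{ad}}=\{\mathbf{u}\in\mathbb{R}^6:\rho>0\text{ and }\mathbf{x}^\top\mathbf{p}\mathbf{x}>0\ \forall\mathbf{x}\in\mathbb{R}^2\setminus\{0\}\}$. The $x$-direction flux is $\mathbf{f}(\mathbf{u})=\big(\rho v_1,\ \rho v_1^2+p_{11},\ \rho v_1v_2+p_{12},\ (E_{11}+p_{11})v_1,\ E_{12}v_1+\tfrac12(p_{11}v_2+p_{12}v_1),\ E_{22}v_1+p_{12}v_2\big)^\top$. *)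

From Stdlib Require Import Reals.
Open Scope R_scope.

(* Conservative variable u = (rho, rho v1, rho v2, E11, E12, E22). *)
Record state := mkState {
  u_rho : R; u_m1 : R; u_m2 : R; u_E11 : R; u_E12 : R; u_E22 : R }.

Definition v1 (u : state) : R := u_m1 u / u_rho u.
Definition v2 (u : state) : R := u_m2 u / u_rho u.
Definition p11 (u : state) : R := 2 * u_E11 u - u_rho u * v1 u ^ 2.
Definition p12 (u : state) : R := 2 * u_E12 u - u_rho u * v1 u * v2 u.
Definition p22 (u : state) : R := 2 * u_E22 u - u_rho u * v2 u ^ 2.

Definition pform (u : state) (x1 x2 : R) : R :=
  p11 u * x1 ^ 2 + 2 * p12 u * x1 * x2 + p22 u * x2 ^ 2.

Definition Uad (u : state) : Prop :=
  0 < u_rho u /\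
  forall x1 x2 : R, (x1 <> 0 \/ x2 <> 0) -> 0 < pform u x1 x2.

Definition flux (u : state) : state :=
  mkState
    (u_rho u * v1 u)
    (u_rho u * v1 u ^ 2 + p11 u)
    (u_rho u * v1 u * v2 u + p12 u)
    ((u_E11 u + p11 u) * v1 u)
    (u_E12 u * v1 u + / 2 * (p11 u * v2 u + p12 u * v1 u))
    (u_E22 u * v1 u + p12 u * v2 u).

Definition alpha (u : state) : R := Rabs (v1 u) + sqrt (3 * p11 u / u_rho u).

Definition wpm (s : R) (u : state) : state :=
  let f := flux u in
  let a := alpha u in
  mkState
    (/ 2 * (u_rho u + s * (u_rho f / a)))
    (/ 2 * (u_m1 u + s * (u_m1 f / a)))
    (/ 2 * (u_m2 u + s * (u_m2 f / a)))
    (/ 2 * (u_E11 u + s * (u_E11 f / a)))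
    (/ 2 * (u_E12 u + s * (u_E12 f / a)))
    (/ 2 * (u_E22 u + s * (u_E22 f / a))).

Definition wplus (u : state) : state := wpm 1 u.
Definition wminus (u : state) : state := wpm (-1) u.

(** Write [e = alpha + s v1] for the sign [s].  Since [alpha] exceeds [|v1|] by
    [c = sqrt (3 p11 / rho)], we get [e >= c > 0], so the density of [w] is
    [rho e / (2 alpha) > 0].  A direct computation gives the pressure form of
    [w] as [(rho e^2 Q - s^2 K^2) / (2 alpha rho e)], where [Q] is the pressure
    form of [u] and [K = p11 x1 + p12 x2].  Cauchy-Schwarz for the positive
    definite tensor gives [K^2 <= p11 Q], while [rho e^2 >= rho c^2 = 3 p11],
    so the numerator is at least [2 p11 Q > 0].  The argument only uses
    [|s| <= 1]. *)

From Stdlib Require Import Reals Lra Psatz.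
Open Scope R_scope.

Lemma pform_p11_sq (u : state) (x1 x2 : R) :
  p11 u * pform u x1 x2 =
  (p11 u * x1 + p12 u * x2) ^ 2 + (p11 u * p22 u - p12 u ^ 2) * x2 ^ 2.
Proof. unfold pform; ring. Qed.

Lemma Uad_p11_gt0 (u : state) : Uad u -> 0 < p11 u.
Proof.
  intros [_ Hpos].
  assert (H := Hpos 1 0 (or_introl R1_neq_R0)).
  unfold pform in H; lra.
Qed.

Lemma Uad_det_gt0 (u : state) : Uad u -> 0 < p11 u * p22 u - p12 u ^ 2.
Proof.
  intros Hu.
  assert (Ha := Uad_p11_gt0 u Hu).
  assert (Hq : 0 < pform u (p12 u) (- p11 u)).
  { apply (proj2 Hu); right; lra. }
  assert (Hid := pform_p11_sq u (p12 u) (- p11 u)).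
  replace (p11 u * p12 u + p12 u * - p11 u) with 0 in Hid by ring.
  nra.
Qed.

Lemma Uad_cauchy_schwarz (u : state) (x1 x2 : R) :
  Uad u -> (p11 u * x1 + p12 u * x2) ^ 2 <= p11 u * pform u x1 x2.
Proof.
  intros Hu.
  rewrite pform_p11_sq.
  assert (Hd := Uad_det_gt0 u Hu).
  nra.
Qed.

Lemma sqrt_le_alpha_add_v1 (u : state) (s : R) :
  Rabs s <= 1 -> sqrt (3 * p11 u / u_rho u) <= alpha u + s * v1 u.
Proof.
  intros Hs.
  assert (Hsv : Rabs (s * v1 u) <= Rabs (v1 u)).
  { rewrite Rabs_mult.
    pose proof (Rabs_pos (v1 u)); pose proof (Rabs_pos s); nra. }
  assert (H := Rle_abs (- (s * v1 u))).
  rewrite Rabs_Ropp in H.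
  unfold alpha; lra.
Qed.

Lemma Uad_p11_le_rho_alpha_add_v1_sq (u : state) (s : R) :
  Rabs s <= 1 -> Uad u -> 3 * p11 u <= u_rho u * (alpha u + s * v1 u) ^ 2.
Proof.
  intros Hs Hu.
  assert (Hr : 0 < u_rho u) by apply Hu.
  assert (Hc : 0 <= 3 * p11 u / u_rho u).
  { pose proof (Uad_p11_gt0 u Hu); apply Rlt_le, Rdiv_lt_0_compat; lra. }
  assert (Hce := sqrt_le_alpha_add_v1 u s Hs).
  assert (Hsq : 3 * p11 u / u_rho u <= (alpha u + s * v1 u) ^ 2).
  { rewrite <- (sqrt_sqrt _ Hc); pose proof (sqrt_pos (3 * p11 u / u_rho u)); nra. }
  apply (Rmult_le_compat_l (u_rho u)) in Hsq; [|lra].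
  replace (u_rho u * (3 * p11 u / u_rho u)) with (3 * p11 u) in Hsq
    by (field; lra).
  exact Hsq.
Qed.

Lemma rho_wpm (u : state) (s : R) :
  alpha u <> 0 ->
  u_rho (wpm s u) = u_rho u * (alpha u + s * v1 u) / (2 * alpha u).
Proof. intros Ha; unfold wpm; simpl; field; exact Ha. Qed.

Lemma pform_wpm (u : state) (s x1 x2 : R) :
  u_rho u <> 0 -> alpha u <> 0 -> alpha u + s * v1 u <> 0 ->
  pform (wpm s u) x1 x2 =
  (u_rho u * (alpha u + s * v1 u) ^ 2 * pform u x1 x2
   - s ^ 2 * (p11 u * x1 + p12 u * x2) ^ 2)
  / (2 * alpha u * u_rho u * (alpha u + s * v1 u)).
Proof.
  unfold wpm; generalize (alpha u); intros a Hr Ha He.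
  destruct u as [r m1 m2 E11 E12 E22].
  unfold pform, flux, p11, p12, p22, v1, v2 in *; simpl in *.
  assert (He' : a * r + s * m1 <> 0).
  { intros H; apply He.
    replace (a + s * (m1 / r)) with ((a * r + s * m1) / r) by (field; exact Hr).
    rewrite H; field; exact Hr. }
  field; auto.
Qed.

Lemma Uad_wpm (u : state) (s : R) : Rabs s <= 1 -> Uad u -> Uad (wpm s u).
Proof.
  intros Hs Hu.
  assert (Hr : 0 < u_rho u) by apply Hu.
  assert (Hp := Uad_p11_gt0 u Hu).
  assert (He3 := Uad_p11_le_rho_alpha_add_v1_sq u s Hs Hu).
  assert (Hc : 0 < sqrt (3 * p11 u / u_rho u)).
  { apply sqrt_lt_R0, Rdiv_lt_0_compat; lra. }
  assert (He := sqrt_le_alpha_add_v1 u s Hs).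
  assert (Ha : 0 < alpha u).
  { unfold alpha; pose proof (Rabs_pos (v1 u)); lra. }
  assert (Hs2 : s ^ 2 <= 1).
  { rewrite <- pow2_abs; pose proof (Rabs_pos s); nra. }
  split.
  - rewrite rho_wpm by lra.
    apply Rdiv_lt_0_compat; nra.
  - intros x1 x2 Hx.
    assert (HQ := proj2 Hu x1 x2 Hx).
    assert (HK := Uad_cauchy_schwarz u x1 x2 Hu).
    rewrite pform_wpm by lra.
    apply Rdiv_lt_0_compat.
    + pose proof (pow2_ge_0 (p11 u * x1 + p12 u * x2)); nra.
    + assert (0 < alpha u * u_rho u) by nra; nra.
Qed.

Theorem theorem2 (u : state) :
  Uad u -> Uad (wplus u) /\ Uad (wminus u).
Proof.
  intros Hu; split; apply Uad_wpm; try exact Hu.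
  - rewrite Rabs_R1; lra.
  - rewrite Rabs_left; lra.
Qed.
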